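(* Let $\mathcal{A}$ be a parity automaton with costs and let $(\rho_j^1)_{j\in\mathbb{N}}$ and $(\rho_j^2)_{j\in\mathbb{N}}$ be sequences of non-empty finite runs of $\mathcal{A}$ such that $\rho_j^1$ and $\rho_j^2$ have the same type for every $j$, and such that $\sup_j|\rho_j^1|<\infty$ and $\sup_j|\rho_j^2|<\infty$ (where $|\rho|$ is the number of transitions of $\rho$). Then $\rho_0^1\rho_1^1\rho_2^1\cdots$ is an accepting run if, and only if, $\rho_0^2\rho_1^2\rho_2^2\cdots$ is an accepting run.
   Context: A parity automaton with costs is a tuple $\mathcal{A}=(Q,\Sigma,q_I,\delta,\Omega,\mathrm{Cst})$ with a finite set $Q$ of states, a finite alphabet $\Sigma$, an initial state $q_I\in Q$, a deterministic complete transition function $\delta\colon Q\times\Sigma\to Q$ (also viewed as the set of transitions $(q,a,\delta(q,a))$), a coloring $\Omega\colon Q\to\mathbb{N}$, and a cost function $\mathrm{Cst}$ assigning to every transition either $\epsilon$ or $\mathtt{i}$ (the latter are called increment-transitions). Throughout, $\Omega(Q)$ contains both an even and an odd color. A run from $q_0$ on $a_0a_1\cdots$ is the sequence of transitions $(q_0,a_0,q_1)(q_1,a_1,q_2)\cdots$ with $q_{j+1}=\delta(q_j,a_j)$; the cost of a finite run is its number of increment-transitions. For odd $c$, let $\mathrm{Ans}(c)=\{c'\in\Omega(Q)\mid c'>c,\ c'\text{ even}\}$. For an infinite run $\rho=(q_0,a_0,q_1)(q_1,a_1,q_2)\cdots$ and $n\in\mathbb{N}$, $\mathrm{Cor}(\rho,n)=0$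 if $\Omega(q_n)$ is even, and otherwise $\mathrm{Cor}(\rho,n)$ is the minimum of the costs of $(q_n,a_n,q_{n+1})\cdots(q_{n'-1},a_{n'-1},q_{n'})$ over all $n'>n$ with $\Omega(q_{n'})\in\mathrm{Ans}(\Omega(q_n))$, with $\min\emptyset=\infty$. An infinite run $\rho$ is accepting if $\limsup_{n\to\infty}\mathrm{Cor}(\rho,n)<\infty$. The type of a non-empty finite run $(q_0,a_0,q_1)\cdots(q_{n-1},a_{n-1},q_n)$ is $(q_0,q_n,c_0,c_1,\ell)$ where (with $\max\emptyset=\bot$) $c_0=\max\{\Omega(q_j)\mid 0\le j\le n,\ \Omega(q_j)\text{ even}\}$, $c_1=\max\{\Omega(q_j)\mid 0\le j\le n,\ \Omega(q_j)\text{ odd},\ \Omega(q_{j'})\notin\mathrm{Ans}(\Omega(q_j))\text{ for all }j<j'\le n\}$, and $\ell=\mathtt{i}$ iff the run contains an increment-transition, $\ell=\epsilon$ otherwise. *)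

From mathcomp Require Import all_boot.
From mathcomp Require Import boolp.
Set Implicit Arguments. Unset Strict Implicit. Unset Printing Implicit Defensive.

Inductive cost := Eps | Inc.
Definition cost_eqb (a b : cost) : bool :=
  match a, b with Eps, Eps | Inc, Inc => true | _, _ => false end.

Record pac (Q Sigma : finType) := Pac {
  qI : Q;
  delta : Q -> Sigma -> Q;
  Omega : Q -> nat;
  Cst : Q * Sigma * Q -> cost }.

Section Defs.
Variables (Q Sigma : finType) (A : pac Q Sigma).

Definition trans := (Q * Sigma * Q)%type.

Definition is_trans (t : trans) : bool := t.2 == delta A t.1.1 t.1.2.

Definition inAns (c c' : nat) : bool :=
  [&& c < c', ~~ odd c' & [exists q : Q, Omega A q == c']].

(* A non-empty finite run is given by its first transition and the rest. *)
Definition frun := (trans * seq trans)%type.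
Definition fr_seq (r : frun) : seq trans := r.1 :: r.2.
Definition rlen (r : frun) : nat := size (fr_seq r).

Definition is_frun (r : frun) : bool :=
  all is_trans (fr_seq r) &&
  path (fun t u : trans => t.2 == u.1.1) r.1 r.2.

Definition fr_states (r : frun) : seq Q := r.1.1.1 :: map (fun t : trans => t.2) (fr_seq r).

(* max of a list of naturals, bottom (None) for the empty list *)
Definition omax (s : seq nat) : option nat :=
  if s is [::] then None else Some (\max_(x <- s) x).

Definition rtype (r : frun) : Q * Q * option nat * option nat * cost :=
  let qs := fr_states r in
  let cs := map (Omega A) qs in
  let c0 := omax [seq c <- cs | ~~ odd c] in
  let c1 := omax [seq nth 0 cs j | j <- iota 0 (size cs) &
                   odd (nth 0 cs j) &&
                   all (fun c' => ~~ inAns (nth 0 cs j) c') (drop j.+1 cs)] in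
  let l := if has (fun t => cost_eqb (Cst A t) Inc) (fr_seq r) then Inc else Eps in
  (r.1.1.1, last r.1.1.1 qs, c0, c1, l).

Definition is_irun (rho : nat -> trans) : Prop :=
  forall n, is_trans (rho n) /\ (rho n).2 = (rho n.+1).1.1.

Definition istate (rho : nat -> trans) (n : nat) : Q := (rho n).1.1.

Definition segcost (rho : nat -> trans) (n n' : nat) : nat :=
  count (fun i => cost_eqb (Cst A (rho i)) Inc) (iota n (n' - n)).

Lemma ex_asbool (P : nat -> Prop) : (exists m, P m) -> exists m, `[< P m >].
Proof. by case=> m Pm; exists m; apply/asboolP. Qed.

(* Cor(rho, n), with None standing for infinity (min of the empty set). *)
Definition Cor (rho : nat -> trans) (n : nat) : option nat :=
  let c := Omega A (istate rho n) in
  if ~~ odd c then Some 0 else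
  let P := fun m => exists n', n < n' /\ inAns c (Omega A (istate rho n')) /\
                              segcost rho n n' = m in
  match pselect (exists m, P m) with
  | left h => Some (ex_minn (ex_asbool h))
  | right _ => None
  end.

(* limsup_n Cor(rho, n) < infinity, written out: eventually bounded. *)
Definition accepting (rho : nat -> trans) : Prop :=
  is_irun rho /\
  exists N B, forall n, N <= n -> exists c, Cor rho n = Some c /\ c <= B.

Definition offset (rs : nat -> frun) (j : nat) : nat :=
  \sum_(i < j) rlen (rs i).

Definition blk (rs : nat -> frun) (n : nat) : nat :=
  \max_(j < n.+1 | offset rs j <= n) j.

Definition cat_inf (rs : nat -> frun) (n : nat) : trans :=
  let j := blk rs n in nth (rs j).1 (fr_seq (rs j)) (n - offset rs j).

End Defs.

From mathcomp Require Import all_boot zify boolp.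
Set Implicit Arguments. Unset Strict Implicit. Unset Printing Implicit Defensive.

(* A concatenation of runs of bounded length is accepting iff (a) consecutive
   blocks are chained and (b) from some block on, the largest unanswered odd
   color c1 of every block is exceeded by the even color c0 of a later block,
   with boundedly many increment-labelled blocks in between.  An odd position
   is either answered inside its block or dominated by the c1 of its block;
   conversely, a cheap answer to the position realising c1 must leave its
   block.  With lengths bounded by K, the cost of a stretch of whole blocks lies
   between the number of its increment-labelled blocks and K times that number,
   so (a) and (b) only depend on the sequence of types. *)

Section TypeSequences.
Variable Q : Type.
Local Notation rtyp := (Q * Q * option nat * option nat * cost)%type.

Definition ty_first (t : rtyp) : Q := t.1.1.1.1.
Definition ty_last (t : rtyp) : Q := t.1.1.1.2.
Definition ty_even (t : rtyp) : option nat := t.1.1.2.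
Definition ty_odd (t : rtyp) : option nat := t.1.2.
Definition ty_inc (t : rtyp) : bool := cost_eqb t.2 Inc.

Definition types_chained (ts : nat -> rtyp) : Prop :=
  forall j, ty_last (ts j) = ty_first (ts j.+1).

Definition types_answered (ts : nat -> rtyp) : Prop :=
  exists J B, forall j c, J <= j -> ty_odd (ts j) = Some c ->
    exists j' e, [/\ j < j', ty_even (ts j') = Some e, c < e &
                     \sum_(j.+1 <= i < j') ty_inc (ts i) <= B].

End TypeSequences.

Section Offsets.
Variables (Q Sigma : finType) (rs : nat -> frun Q Sigma).
Local Notation off := (offset rs).

Lemma offsetS j : off j.+1 = off j + rlen (rs j).
Proof. by rewrite /offset big_ord_recr. Qed.

Lemma leq_offset : {homo off : i j / i <= j}.
Proof.
apply: homo_leq => [//|???|k]; first exact: leq_trans.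
by rewrite offsetS leq_addr.
Qed.

Lemma offset_geq j : j <= off j.
Proof. by elim: j => // j IH; rewrite offsetS -addn1 leq_add. Qed.

Lemma leq_offset_block i j k : k < rlen (rs j) -> (off i <= off j + k) = (i <= j).
Proof.
move=> ltk; apply/idP/idP => [|/leq_offset le_ij]; last exact: leq_trans le_ij (leq_addr _ _).
apply: contraLR; rewrite -!ltnNge => /leq_offset; rewrite offsetS.
by apply: leq_trans; rewrite ltn_add2l.
Qed.

Lemma offset_block n : exists j k, k < rlen (rs j) /\ n = off j + k.
Proof.
elim: n => [|n [j [k [ltk ->]]]]; first by exists 0, 0; rewrite /offset big_ord0.
have [ltk1 | ] := ltnP k.+1 (rlen (rs j)); first by exists j, k.+1; rewrite addnS.
rewrite leq_eqVlt ltnS leqNgt ltk orbF => /eqP eq_k.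
by exists j.+1, 0; rewrite addn0 offsetS eq_k addnS.
Qed.

Lemma blk_offset j k : k < rlen (rs j) -> blk rs (off j + k) = j.
Proof.
move=> ltk; apply/eqP; rewrite eqn_leq; apply/andP; split.
  by apply/bigmax_leqP => i; rewrite leq_offset_block.
have ltj : j < (off j + k).+1 by rewrite ltnS (leq_trans (offset_geq j)) ?leq_addr.
by apply: (@leq_bigmax_cond _ _ _ (Ordinal ltj)); rewrite /= leq_addr.
Qed.

Lemma cat_inf_offset j k : k < rlen (rs j) ->
  cat_inf rs (off j + k) = nth (rs j).1 (fr_seq (rs j)) k.
Proof. by move=> ltk; rewrite /cat_inf blk_offset // addKn. Qed.

Lemma cat_inf_block j : map (cat_inf rs) (iota (off j) (rlen (rs j))) = fr_seq (rs j).
Proof.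
apply: (@eq_from_nth _ (rs j).1); first by rewrite size_map size_iota.
move=> k; rewrite size_map size_iota => ltk.
by rewrite (nth_map 0) ?size_iota // nth_iota // cat_inf_offset.
Qed.

End Offsets.

Section Costs.
Variables (Q Sigma : finType) (A : pac Q Sigma).

Definition inc_trans (t : trans Q Sigma) : bool := cost_eqb (Cst A t) Inc.

Definition frcost (r : frun Q Sigma) : nat := count inc_trans (fr_seq r).

Section Segments.
Variable rho : nat -> trans Q Sigma.

Lemma segcost_cat n m p : n <= m -> m <= p ->
  segcost A rho n p = segcost A rho n m + segcost A rho m p.
Proof.
move=> le_nm le_mp; rewrite /segcost; have -> : p - n = (m - n) + (p - m) by lia.
by rewrite iotaD count_cat subnKC.
Qed.

Lemma segcost_size n m : segcost A rho n m <= m - n.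
Proof. by rewrite /segcost (leq_trans (count_size _ _)) ?size_iota. Qed.

Lemma leq_segcost m n n' m' : m <= n -> n' <= m' ->
  segcost A rho n n' <= segcost A rho m m'.
Proof.
move=> le_mn le_nm'; have [le_nn' | /ltnW] := leqP n n'; last first.
  by rewrite -subn_eq0 /segcost => /eqP ->.
rewrite (@segcost_cat m n m') ?(leq_trans le_nn') // (@segcost_cat n n' m') //.
by rewrite addnCA leq_addr.
Qed.

End Segments.

Lemma ty_inc_rtype (r : frun Q Sigma) : ty_inc (rtype A r) = has inc_trans (fr_seq r).
Proof. by rewrite /ty_inc /rtype; case: has. Qed.

Lemma ty_inc_leq_frcost (r : frun Q Sigma) : ty_inc (rtype A r) <= frcost r.
Proof. by rewrite ty_inc_rtype /frcost has_count; case: ltnP. Qed.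

Lemma frcost_leq_ty_inc (r : frun Q Sigma) : frcost r <= rlen r * ty_inc (rtype A r).
Proof.
rewrite ty_inc_rtype /frcost has_count; case: ltnP => [_ | ]; last by rewrite muln0.
by rewrite muln1 count_size.
Qed.

Section BlockCosts.
Variable rs : nat -> frun Q Sigma.
Local Notation off := (offset rs).
Local Notation rho := (cat_inf rs).

Lemma segcost_offset a b : a <= b ->
  segcost A rho (off a) (off b) = \sum_(a <= i < b) frcost (rs i).
Proof.
elim: b => [|b IH]; first by rewrite leqn0 => /eqP ->; rewrite /segcost subnn big_geq.
rewrite leq_eqVlt ltnS => /predU1P [-> | le_ab]; first by rewrite /segcost subnn big_geq.
rewrite (@segcost_cat _ _ (off b)) ?leq_offset // IH // big_nat_recr //=.
by rewrite /segcost offsetS addKn -(count_map _ inc_trans) cat_inf_block.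
Qed.

Lemma segcost_across_blocks j k j' k' : k < rlen (rs j) -> j < j' ->
  k' <= rlen (rs j') ->
  segcost A rho (off j + k) (off j' + k')
    <= rlen (rs j) + \sum_(j.+1 <= i < j') frcost (rs i) + rlen (rs j').
Proof.
move=> ltk lt_jj' lek'; have le_off := leq_offset rs lt_jj'.
rewrite (@segcost_cat _ _ (off j.+1)) ?(leq_trans le_off) ?leq_addr //; last first.
  by rewrite offsetS leq_add2l ltnW.
rewrite (@segcost_cat _ (off j.+1) (off j')) ?leq_addr // segcost_offset //.
rewrite -addnA leq_add //.
  by rewrite (leq_trans (segcost_size _ _ _)) // offsetS; lia.
by rewrite leq_add2l (leq_trans (segcost_size _ _ _)) //; lia.
Qed.

Lemma sum_frcost_leq K a b : (forall j, rlen (rs j) <= K) ->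
  \sum_(a <= i < b) frcost (rs i) <= K * \sum_(a <= i < b) ty_inc (rtype A (rs i)).
Proof.
move=> len_K; rewrite big_distrr leq_sum // => i _.
by rewrite (leq_trans (frcost_leq_ty_inc _)) // leq_mul2r len_K orbT.
Qed.

End BlockCosts.

End Costs.


Section Runs.
Variables (Q Sigma : finType) (A : pac Q Sigma).

Lemma ty_last_rtype (r : frun Q Sigma) : ty_last (rtype A r) = (last r.1 r.2).2.
Proof. by rewrite /ty_last /= /fr_states /fr_seq /= last_map. Qed.

Section Concatenation.
Variable rs : nat -> frun Q Sigma.
Hypothesis rs_frun : forall j, is_frun A (rs j).
Local Notation off := (offset rs).
Local Notation rho := (cat_inf rs).

Lemma cat_inf_last j : rho (off j.+1).-1 = last (rs j).1 (rs j).2.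
Proof.
have ltk : size (rs j).2 < rlen (rs j) by [].
by rewrite offsetS /rlen /= addnS /= cat_inf_offset // /fr_seq /= (nth_last (rs j).1).
Qed.

Lemma cat_inf_irun : is_irun A rho <-> types_chained (rtype A \o rs).
Proof.
split=> [rho_run j | chained n].
  have lt0_off : 0 < off j.+1 by rewrite offsetS addnS.
  rewrite /= ty_last_rtype -cat_inf_last (rho_run _).2 prednK //.
  by rewrite -[off j.+1]addn0 cat_inf_offset.
have [j [k [ltk ->]]] := offset_block rs n; have /andP [trans_rs path_rs] := rs_frun j.
split; first by rewrite cat_inf_offset //; apply: (all_nthP (rs j).1 trans_rs).
have [ltk1 | ] := ltnP k.+1 (rlen (rs j)).
  by rewrite -addnS !cat_inf_offset //; apply/eqP/(pathP (rs j).1 path_rs).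
rewrite leq_eqVlt ltnS leqNgt ltk orbF => /eqP eq_k.
have -> : off j + k = (off j.+1).-1 by rewrite offsetS eq_k addnS.
have -> : (off j.+1).-1.+1 = off j.+1 + 0 by rewrite addn0 offsetS eq_k addnS.
by rewrite cat_inf_last cat_inf_offset // -ty_last_rtype (chained j).
Qed.

Lemma nth_fr_states_cat_inf j k : is_irun A rho -> k <= rlen (rs j) ->
  nth (rs j).1.1.1 (fr_states (rs j)) k = istate rho (off j + k).
Proof.
case: k => [_ _ | k rho_run ltk]; first by rewrite /istate addn0 -[off j]addn0 cat_inf_offset.
change (nth (rs j).1.1.1 [seq t.2 | t <- fr_seq (rs j)] k = istate rho (off j + k.+1)).
by rewrite (nth_map (rs j).1) // /istate addnS -(rho_run _).2 cat_inf_offset.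
Qed.

End Concatenation.
End Runs.

Lemma omax_mem s m : omax s = Some m -> m \in s.
Proof.
case: s => [|x s] //= [<-]; elim: s x => [|y s IH] x.
  by rewrite big_seq1 mem_seq1.
rewrite big_cons in_cons; case: leqP => _; last by rewrite eqxx.
by rewrite IH orbT.
Qed.

Lemma omax_geq s x : x \in s -> exists2 m, omax s = Some m & x <= m.
Proof. by case: s => // y s x_s; exists (\max_(z <- y :: s) z); rewrite ?leq_bigmax_seq. Qed.

Section Colors.
Variables (Q Sigma : finType) (A : pac Q Sigma).

Definition colors (r : frun Q Sigma) : seq nat := map (Omega A) (fr_states r).

Definition unanswered (cs : seq nat) (k : nat) : bool :=
  all (fun c' => ~~ inAns A (nth 0 cs k) c') (drop k.+1 cs).

Lemma size_colors r : size (colors r) = (rlen r).+1.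
Proof. by rewrite /colors size_map /= size_map. Qed.

Lemma nth_colors_cat_inf rs j k : is_irun A (cat_inf rs) -> k <= rlen (rs j) ->
  nth 0 (colors (rs j)) k = Omega A (istate (cat_inf rs) (offset rs j + k)).
Proof.
move=> rho_run lek; rewrite (nth_map (rs j).1.1.1) ?(nth_fr_states_cat_inf rho_run lek) //.
by rewrite /fr_states /= size_map ltnS.
Qed.

Lemma ty_even_rtype_witness r e : ty_even (rtype A r) = Some e ->
  exists2 k, k <= rlen r & nth 0 (colors r) k = e /\ ~~ odd e.
Proof.
move/omax_mem; rewrite mem_filter => /andP [even_e /(nthP 0) [k ltk nth_k]].
by rewrite -/(colors r) size_colors ltnS in ltk; exists k.
Qed.

Lemma ty_even_rtype_geq r k : k <= rlen r -> ~~ odd (nth 0 (colors r) k) ->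
  exists2 e, ty_even (rtype A r) = Some e & nth 0 (colors r) k <= e.
Proof.
by move=> lek even_k; apply: omax_geq; rewrite mem_filter even_k mem_nth ?size_colors.
Qed.

Lemma ty_odd_rtype_witness r c : ty_odd (rtype A r) = Some c ->
  exists2 k, k <= rlen r & [/\ nth 0 (colors r) k = c, odd c & unanswered (colors r) k].
Proof.
move/omax_mem/mapP => [k]; rewrite mem_filter mem_iota => /andP [/andP [odd_k un_k] ltk] ->.
by rewrite -/(colors r) size_colors ltnS in ltk; exists k.
Qed.

Lemma ty_odd_rtype_geq r k : k <= rlen r -> odd (nth 0 (colors r) k) ->
  unanswered (colors r) k ->
  exists2 c, ty_odd (rtype A r) = Some c & nth 0 (colors r) k <= c.
Proof.
move=> lek odd_k un_k; apply: omax_geq; apply/mapP; exists k => //.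
rewrite mem_filter mem_iota -/(colors r) size_colors ltnS lek odd_k leq0n.
by apply/andP; split; [exact: un_k |].
Qed.

End Colors.

Section Correction.
Variables (Q Sigma : finType) (A : pac Q Sigma) (rho : nat -> trans Q Sigma).
Local Notation col n := (Omega A (istate rho n)).

Lemma Cor_even n : ~~ odd (col n) -> Cor A rho n = Some 0.
Proof. by rewrite /Cor => ->. Qed.

Lemma Cor_leq_segcost n n' : n < n' -> inAns A (col n) (col n') ->
  exists2 x, Cor A rho n = Some x & x <= segcost A rho n n'.
Proof.
move=> lt_nn' ans_n'; rewrite /Cor; case: ifP => _; first by exists 0.
case: pselect => [ex_cost | []]; last by exists (segcost A rho n n'), n'.
exists (ex_minn (ex_asbool ex_cost)) => //; case: ex_minnP => m _; apply.
by apply/asboolP; exists n'.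
Qed.

Lemma Cor_witness n x : odd (col n) -> Cor A rho n = Some x ->
  exists n', [/\ n < n', inAns A (col n) (col n') & segcost A rho n n' = x].
Proof.
rewrite /Cor => ->; case: pselect => // ex_cost.
by case: ex_minnP => m /asboolP [n' [? [? ?]]] _ [<-]; exists n'.
Qed.

End Correction.

Section Acceptance.
Variables (Q Sigma : finType) (A : pac Q Sigma) (rs : nat -> frun Q Sigma).
Local Notation off := (offset rs).
Local Notation rho := (cat_inf rs).
Local Notation col n := (Omega A (istate rho n)).

Lemma answer_beyond_block j k n' : is_irun A rho -> k <= rlen (rs j) ->
  unanswered A (colors A (rs j)) k -> off j + k < n' ->
  inAns A (col (off j + k)) (col n') -> off j.+1 < n'.
Proof.
move=> rho_run lek /(all_nthP 0) un_k lt_n' ans_n'; rewrite ltnNge; apply/negP.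
rewrite offsetS => le_n'; pose i := n' - (off j + k.+1).
have lti : i < size (drop k.+1 (colors A (rs j))) by rewrite size_drop size_colors; lia.
have le_ki : k.+1 + i <= rlen (rs j) by lia.
move: (un_k i lti); rewrite nth_drop !nth_colors_cat_inf //.
have -> : off j + (k.+1 + i) = n' by lia.
by rewrite ans_n'.
Qed.

Lemma answered_of_accepting : accepting A rho -> types_answered (rtype A \o rs).
Proof.
move=> [rho_run [N [B cor_bounded]]]; exists N, B => j c le_Nj /= odd_c.
have [k lek [col_k odd_k un_k]] := ty_odd_rtype_witness odd_c.
rewrite nth_colors_cat_inf // in col_k; rewrite -col_k in odd_k.
have le_Nk : N <= off j + k.
  by rewrite (leq_trans le_Nj) // (leq_trans (offset_geq rs j)) ?leq_addr.
have [x [cor_x le_xB]] := cor_bounded _ le_Nk.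
have [n' [lt_n' ans_n' cost_n']] := Cor_witness odd_k cor_x.
have lt_off_n' := answer_beyond_block rho_run lek un_k lt_n' ans_n'.
have [j' [k' [ltk' def_n']]] := offset_block rs n'.
have lt_jj' : j < j' by rewrite -(leq_offset_block j.+1 ltk') -def_n' (ltnW lt_off_n').
have /and3P [lt_col even_n' _] := ans_n'.
have col_k' := nth_colors_cat_inf rho_run (ltnW ltk'); rewrite -def_n' in col_k'.
have even_k' : ~~ odd (nth 0 (colors A (rs j')) k') by rewrite col_k'.
have [e even_e le_e] := ty_even_rtype_geq (ltnW ltk') even_k'.
exists j', e; split=> //; first by rewrite -col_k (leq_trans lt_col) // -col_k'.
apply: leq_trans (_ : \sum_(j.+1 <= i < j') frcost A (rs i) <= B).
  by apply: leq_sum => i _; apply: ty_inc_leq_frcost.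
rewrite -segcost_offset // (leq_trans _ le_xB) // -cost_n' leq_segcost //.
  by rewrite offsetS leq_add2l.
by rewrite def_n' leq_addr.
Qed.

Lemma accepting_of_answered K : (forall j, rlen (rs j) <= K) -> is_irun A rho ->
  types_answered (rtype A \o rs) -> accepting A rho.
Proof.
move=> len_K rho_run [J [B answered]]; split=> //.
exists (off J), (K + K * B + K) => n le_Jn.
have [j [k [ltk def_n]]] := offset_block rs n.
have le_Jj : J <= j by rewrite -(leq_offset_block J ltk) -def_n.
have col_k := nth_colors_cat_inf rho_run (ltnW ltk); rewrite -def_n in col_k.
have [odd_n | even_n] := boolP (odd (col n)); last by exists 0; rewrite Cor_even.
suff [n' [lt_n' ans_n' cost_n']] : exists n',
    [/\ n < n', inAns A (col n) (col n') & segcost A rho n n' <= K + K * B + K].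
  have [x cor_x le_x] := Cor_leq_segcost lt_n' ans_n'.
  by exists x; rewrite cor_x (leq_trans le_x).
have [un_k | /allPn [c' /(nthP 0) [i lti nth_i] ans_i]] :=
  boolP (unanswered A (colors A (rs j)) k).
  have odd_k : odd (nth 0 (colors A (rs j)) k) by rewrite col_k.
  have [c odd_c le_c] := ty_odd_rtype_geq (ltnW ltk) odd_k un_k.
  have [j' [e [lt_jj' even_e lt_ce sum_B]]] := answered j c le_Jj odd_c.
  have [k' lek' [col_k' even_c]] := ty_even_rtype_witness even_e.
  rewrite nth_colors_cat_inf // in col_k'.
  exists (off j' + k'); split.
  - have := leq_offset rs lt_jj'; rewrite def_n offsetS; lia.
  - rewrite /inAns col_k' -col_k (leq_ltn_trans le_c) // even_c /=.
    by apply/existsP; exists (istate rho (off j' + k')); rewrite col_k'.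
  - rewrite def_n (leq_trans (segcost_across_blocks _ ltk lt_jj' lek')) //.
    rewrite !leq_add ?len_K // (leq_trans (sum_frcost_leq _ _ _ len_K)) //.
    by rewrite leq_mul2l sum_B orbT.
move: lti; rewrite size_drop size_colors => lti.
have le_i : k.+1 + i <= rlen (rs j) by lia.
exists (off j + (k.+1 + i)); split.
- by rewrite def_n; lia.
- by rewrite -col_k -(nth_colors_cat_inf rho_run le_i) -nth_drop nth_i -(negbK (inAns _ _ _)).
- by rewrite def_n (leq_trans (segcost_size _ _ _ _)) //; have := len_K j; lia.
Qed.

Lemma accepting_cat_infE K : (forall j, is_frun A (rs j)) -> (forall j, rlen (rs j) <= K) ->
  accepting A rho <-> types_chained (rtype A \o rs) /\ types_answered (rtype A \o rs).
Proof.
move=> rs_frun len_K; split=> [acc | [chained answered]].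
  by split; [apply/(cat_inf_irun rs_frun); case: acc | exact: answered_of_accepting].
by apply: accepting_of_answered len_K _ answered; apply/(cat_inf_irun rs_frun).
Qed.

End Acceptance.

Theorem corollary1 (Q Sigma : finType) (A : pac Q Sigma)
  (Heven : exists q : Q, ~~ odd (Omega A q))
  (Hodd : exists q : Q, odd (Omega A q))
  (r1 r2 : nat -> frun Q Sigma) :
  (forall j, is_frun A (r1 j)) ->
  (forall j, is_frun A (r2 j)) ->
  (forall j, rtype A (r1 j) = rtype A (r2 j)) ->
  (exists K, forall j, rlen (r1 j) <= K) ->
  (exists K, forall j, rlen (r2 j) <= K) ->
  (accepting A (cat_inf r1) <-> accepting A (cat_inf r2)).
Proof.
move=> r1_frun r2_frun same_types [K1 len_K1] [K2 len_K2].
rewrite (accepting_cat_infE r1_frun len_K1) (accepting_cat_infE r2_frun len_K2).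
by have -> : rtype A \o r1 = rtype A \o r2 by apply: funext => j; apply: same_types.
Qed.
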